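(* Let $d,K\ge1$, $\lambda>0$, $\epsilon>0$, $a^*\in[K]$. For each arm $a\in[K]$ let $X_a\in\mathbb{R}^{m_a\times d}$, $V_a=X_a^\top X_a+\lambda I$, let $\hat\theta_a\in\mathbb{R}^d$ be the (post-attack) parameter estimate and $\alpha_a\in\mathbb{R}$ an exploration parameter independent of the context, and write $\|x\|_{V_a^{-1}}=\sqrt{x^\top V_a^{-1}x}$. Call $x\in\mathbb{R}^d$ $\epsilon$-strongly attacked if $$x^\top\hat\theta_{a^*}+\alpha_{a^*}\|x\|_{V_{a^*}^{-1}}\ \ge\ \epsilon+x^\top\hat\theta_a+\alpha_a\|x\|_{V_a^{-1}}\quad\text{for all }a\neq a^*.$$ If $x$ is $\epsilon$-strongly attacked, then $cx$ is $\epsilon$-strongly attacked for every $c\ge1$.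
   Context: Linear contextual bandit with UCB arm selection; after a reward-poisoning attack the estimates are $\hat\theta_a=V_a^{-1}X_a^\top(y_a+\Delta_a)$ for modified reward vectors $y_a+\Delta_a$. *)

From HB Require Import structures.
From mathcomp Require Import all_boot all_order all_algebra.
Set Implicit Arguments. Unset Strict Implicit. Unset Printing Implicit Defensive.
Import Order.TTheory GRing.Theory Num.Theory.
Local Open Scope ring_scope.

Definition dotv (R : pzRingType) (d : nat) (x y : 'cV[R]_d) : R := (x^T *m y) 0 0.

Definition gram_reg (R : comUnitRingType) (m d : nat) (X : 'M[R]_(m, d)) (lam : R)
  : 'M[R]_d := X^T *m X + lam%:M.

Definition wnorm_inv (R : rcfType) (d : nat) (V : 'M[R]_d) (x : 'cV[R]_d) : R :=
  Num.sqrt (dotv x (invmx V *m x)).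

Definition strongly_attacked (R : rcfType) (d K : nat) (m : 'I_K -> nat)
  (X : forall a : 'I_K, 'M[R]_(m a, d)) (lam : R)
  (theta : 'I_K -> 'cV[R]_d) (alpha : 'I_K -> R) (astar : 'I_K) (eps : R)
  (x : 'cV[R]_d) : Prop :=
  forall a : 'I_K, a != astar ->
    dotv x (theta astar) + alpha astar * wnorm_inv (gram_reg (X astar) lam) x
    >= eps + dotv x (theta a) + alpha a * wnorm_inv (gram_reg (X a) lam) x.

From HB Require Import structures.
From mathcomp Require Import all_boot all_order all_algebra.
Set Implicit Arguments. Unset Strict Implicit. Unset Printing Implicit Defensive.
Import Order.TTheory GRing.Theory Num.Theory.
Local Open Scope ring_scope.

(* Each UCB index x^T theta + alpha ||x||_{V^-1} is positively homogeneous in x,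
   so scaling by c >= 1 multiplies both sides of the attack inequality by c,
   which can only enlarge the margin eps. *)

Lemma dotvZl (R : comPzRingType) (d : nat) (c : R) (x y : 'cV[R]_d) :
  dotv (c *: x) y = c * dotv x y.
Proof. by rewrite /dotv linearZ /= -scalemxAl mxE. Qed.

Lemma dotvZr (R : comPzRingType) (d : nat) (c : R) (x y : 'cV[R]_d) :
  dotv x (c *: y) = c * dotv x y.
Proof. by rewrite /dotv -scalemxAr mxE. Qed.

Lemma wnorm_invZ (R : rcfType) (d : nat) (V : 'M[R]_d) (c : R) (x : 'cV[R]_d) :
  0 <= c -> wnorm_inv V (c *: x) = c * wnorm_inv V x.
Proof.
move=> c_ge0; rewrite /wnorm_inv -scalemxAr dotvZl dotvZr mulrA -expr2.
by rewrite sqrtrM ?sqr_ge0 // sqrtr_sqr ger0_norm.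
Qed.

Definition ucb_index (R : rcfType) (d : nat) (V : 'M[R]_d) (theta : 'cV[R]_d)
  (alpha : R) (x : 'cV[R]_d) : R :=
  dotv x theta + alpha * wnorm_inv V x.

Lemma ucb_indexZ (R : rcfType) (d : nat) (V : 'M[R]_d) (theta : 'cV[R]_d)
  (alpha c : R) (x : 'cV[R]_d) :
  0 <= c -> ucb_index V theta alpha (c *: x) = c * ucb_index V theta alpha x.
Proof. by move=> c_ge0; rewrite /ucb_index dotvZl wnorm_invZ // mulrDr mulrCA. Qed.

Lemma ler_margin_scale (R : numDomainType) (eps u v c : R) :
  0 <= eps -> 1 <= c -> eps + v <= u -> eps + c * v <= c * u.
Proof.
move=> eps_ge0 c_ge1 le_vu; have c_ge0 : 0 <= c := le_trans ler01 c_ge1.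
apply: le_trans (ler_wpM2l c_ge0 le_vu); rewrite mulrDr lerD2r.
by rewrite -[leLHS]mul1r ler_wpM2r.
Qed.

Theorem proposition2 (R : rcfType) (d K : nat) (hd : (1 <= d)%N) (hK : (1 <= K)%N)
  (lam eps : R) (hlam : 0 < lam) (heps : 0 < eps) (astar : 'I_K)
  (m : 'I_K -> nat) (X : forall a : 'I_K, 'M[R]_(m a, d))
  (theta : 'I_K -> 'cV[R]_d) (alpha : 'I_K -> R) (x : 'cV[R]_d) :
  strongly_attacked X lam theta alpha astar eps x ->
  forall c : R, 1 <= c -> strongly_attacked X lam theta alpha astar eps (c *: x).
Proof.
move=> attacked c c_ge1 a a_neq; have c_ge0 : 0 <= c := le_trans ler01 c_ge1.
have := attacked a a_neq; rewrite -!addrA.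
rewrite -![dotv _ _ + _]/(ucb_index _ _ _ _) !ucb_indexZ //.
exact: ler_margin_scale (ltW heps) c_ge1.
Qed.
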